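(* Let $n\ge 3$ be an integer and let $\varphi$ be the automorphism of $F$ with $\varphi(x)=x$, $\varphi(y)=yx$. Then $(\varphi(r_1),\varphi(r_2))\sim_{AC}(r_1,r_2)$, where $(r_1,r_2)=\mathrm{AK}(n)=(xyxy^{-1}x^{-1}y^{-1},\ x^ny^{-(n+1)})$.
   Context: $F=F(x,y)$ is the free group on $\{x,y\}$. The Akbulut–Kurby pair is $\mathrm{AK}(n)=(xyxy^{-1}x^{-1}y^{-1},\ x^{n}y^{-(n+1)})$, i.e. the presentation $\langle x,y\mid xyx=yxy,\ x^n=y^{n+1}\rangle$ of the trivial group. The Andrews–Curtis (AC) moves on a pair $(r_1,r_2)\in F^2$ are: replace $r_i$ by $r_ir_j$ ($i\ne j$); replace $r_i$ by $r_i^{-1}$; replace $r_i$ by $w^{-1}r_iw$ for some $w\in F$. Two pairs are AC-equivalent, $\sim_{AC}$, if one can be obtained from the other by a finite sequence of AC-moves. *)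

From mathcomp Require Import all_boot.
From Stdlib Require Import Relations.
Set Implicit Arguments. Unset Strict Implicit. Unset Printing Implicit Defensive.

(* A letter is (g, e): g = false means x, g = true means y;
   e = false means exponent +1, e = true means exponent -1. *)
Definition letter := (bool * bool)%type.
Definition word := seq letter.

Definition lx : letter := (false, false).
Definition lX : letter := (false, true).
Definition ly : letter := (true, false).
Definition lY : letter := (true, true).

Definition inv_letter (a : letter) : letter := (a.1, ~~ a.2).

Fixpoint reduce (w : word) : word :=
  match w with
  | [::] => [::]
  | a :: w' =>
      match reduce w' with
      | b :: r => if b == inv_letter a then r else a :: b :: r
      | [::] => [:: a]
      end
  end.

Definition reduced (w : word) : bool := reduce w == w.

Definition wmul (u v : word) : word := reduce (u ++ v).
Definition winv (w : word) : word := rev (map inv_letter w).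
Definition wconj (r w : word) : word := wmul (winv w) (wmul r w).

Inductive ac_move : word * word -> word * word -> Prop :=
  | ac_mul12 r1 r2 : ac_move (r1, r2) (wmul r1 r2, r2)
  | ac_mul21 r1 r2 : ac_move (r1, r2) (r1, wmul r2 r1)
  | ac_inv1 r1 r2 : ac_move (r1, r2) (winv r1, r2)
  | ac_inv2 r1 r2 : ac_move (r1, r2) (r1, winv r2)
  | ac_conj1 r1 r2 w : ac_move (r1, r2) (wconj r1 w, r2)
  | ac_conj2 r1 r2 w : ac_move (r1, r2) (r1, wconj r2 w).

Definition ac_equiv : word * word -> word * word -> Prop :=
  clos_refl_trans _ ac_move.

Definition AK1 : word := reduce [:: lx; ly; lx; lY; lX; lY].
Definition AK2 (n : nat) : word := reduce (nseq n lx ++ nseq n.+1 lY).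

Definition phi_letter (a : letter) : word :=
  match a with
  | (false, false) => [:: lx]
  | (false, true) => [:: lX]
  | (true, false) => [:: ly; lx]
  | (true, true) => [:: lX; lY]
  end.
Definition phi (w : word) : word := reduce (flatten (map phi_letter w)).

From mathcomp Require Import all_boot.
From Stdlib Require Import Relations Setoid Morphisms.
Set Implicit Arguments. Unset Strict Implicit. Unset Printing Implicit Defensive.

(* Write r1 = x y x y^-1 x^-1 y^-1, r2 = x^n y^-(n+1), s = x^-(n+1) y x^n y^-1,
   and u = v %[rel r] for equality in the one-relator group <x, y | r>.
   A pair (a, b) is AC-equivalent to (a, c), in both directions, as soon as c is
   conjugate to b in <x, y | a>.  In <x, y | r1> the element xyx conjugates x to y,
   and this makes s conjugate to r2; in <x, y | s>, where y x^n = x^(n+1) y, the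
   word phi(r1) is conjugate to r1.  Hence
     (phi r1, phi r2) ~ (phi r1, s) ~ (r1, s) ~ (r1, r2),
   where the first step is the image under phi of the last one, because s is
   fixed by phi up to free reduction. *)

Lemma inv_letterK : involutive inv_letter.
Proof. by case=> g e; rewrite /inv_letter negbK. Qed.

Definition push (a : letter) (r : word) : word :=
  if r is b :: r' then (if b == inv_letter a then r' else a :: b :: r') else [:: a].

Lemma reduce_cons a w : reduce (a :: w) = push a (reduce w).
Proof. by []. Qed.

Lemma reduce_cat u v : reduce (u ++ v) = foldr push (reduce v) u.
Proof. by elim: u => //= a u <-. Qed.

Definition noncancelling (a b : letter) : bool := b != inv_letter a.

Lemma sorted_push a r : sorted noncancelling r -> sorted noncancelling (push a r).
Proof.
case: r => [|b r] //= br_sorted; case: ifP => [_ | /negbT ab].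
- exact: path_sorted br_sorted.
- by rewrite /= [noncancelling a b]ab.
Qed.

Lemma sorted_reduce w : sorted noncancelling (reduce w).
Proof. by elim: w => //= a w; apply: sorted_push. Qed.

Lemma pushK a r : sorted noncancelling r -> push a (push (inv_letter a) r) = r.
Proof.
case: r => [|b r] /=; first by rewrite eqxx.
rewrite inv_letterK; have [->|ba] := eqVneq b a; last by rewrite /= eqxx.
by case: r => [|c r] //= /andP[/negbTE ->].
Qed.

Lemma reduce_cancel u v c : reduce (u ++ c :: inv_letter c :: v) = reduce (u ++ v).
Proof. by rewrite !reduce_cat !reduce_cons pushK ?sorted_reduce. Qed.

Inductive eq_mod (r : word) : word -> word -> Prop :=
  | eq_mod_refl u : eq_mod r u u
  | eq_mod_sym u v : eq_mod r u v -> eq_mod r v u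
  | eq_mod_trans u v w : eq_mod r u v -> eq_mod r v w -> eq_mod r u w
  | eq_mod_cancel u v c : eq_mod r (u ++ c :: inv_letter c :: v) (u ++ v)
  | eq_mod_rel u v : eq_mod r (u ++ r ++ v) (u ++ v).

Notation "u = v %[rel r ]" := (eq_mod r u v)
  (at level 70, v at next level, format "u  =  v  %[rel  r ]").

#[export] Hint Resolve eq_mod_refl : core.

#[export] Instance eq_mod_equiv r : Equivalence (eq_mod r).
Proof. by split; [exact: eq_mod_refl | exact: eq_mod_sym | exact: eq_mod_trans]. Qed.

Lemma eq_mod_ctx r p q u v : u = v %[rel r] -> p ++ u ++ q = p ++ v ++ q %[rel r].
Proof.
elim=> {u v} [u | u v _ IH | u v w _ IH1 _ IH2 | u v c | u v].
- by [].
- by symmetry.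
- by transitivity (p ++ v ++ q).
- by rewrite -!catA catA [p ++ u ++ v ++ q]catA; apply: eq_mod_cancel.
- by rewrite -!catA catA [p ++ u ++ v ++ q]catA; apply: eq_mod_rel.
Qed.

#[export] Instance cat_eq_mod r : Proper (eq_mod r ==> eq_mod r ==> eq_mod r) cat.
Proof.
move=> u u' hu v v' hv; transitivity (u' ++ v).
- by have := eq_mod_ctx [::] v hu.
- by have := eq_mod_ctx u' [::] hv; rewrite !cats0.
Qed.

#[export] Instance cons_eq_mod r : Proper (eq ==> eq_mod r ==> eq_mod r) (@cons letter).
Proof. by move=> a _ <- u v; exact: (cat_eq_mod (eq_mod_refl r [:: a])). Qed.

Lemma reduce_eq_mod r w : reduce w = w %[rel r].
Proof.
elim: w => // a w IH; rewrite reduce_cons -[in X in _ = X %[rel _]]IH.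
case: (reduce w) => [|b u] //=; case: eqP => [-> | _] //.
by symmetry; apply: (eq_mod_cancel _ [::]).
Qed.

Lemma eq_mod0_reduce u v : u = v %[rel [::]] -> reduce u = reduce v.
Proof.
elim=> {u v} // [u v w _ -> _ -> | u v c] //.
exact: reduce_cancel.
Qed.

Lemma reduce_idem w : reduce (reduce w) = reduce w.
Proof. exact/eq_mod0_reduce/reduce_eq_mod. Qed.

Lemma eq_mod_self r : r = [::] %[rel r].
Proof. by have := eq_mod_rel r [::] [::]; rewrite cats0. Qed.

Lemma eq_mod_sub r r' u v : r = [::] %[rel r'] -> u = v %[rel r] -> u = v %[rel r'].
Proof.
move=> r_trivial; elim=> {u v} [u | u v _ IH | u v w _ IH1 _ IH2 | u v c | u v] //.
- by symmetry.
- by transitivity v.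
- exact: eq_mod_cancel.
- by rewrite r_trivial.
Qed.

Lemma eq_mod_reduce_rel r u v : u = v %[rel r] -> u = v %[rel reduce r].
Proof.
apply: eq_mod_sub; transitivity (reduce r); last exact: eq_mod_self.
by symmetry; apply: reduce_eq_mod.
Qed.

Lemma winv_cat u v : winv (u ++ v) = winv v ++ winv u.
Proof. by rewrite /winv map_cat rev_cat. Qed.

Lemma winv_cons a w : winv (a :: w) = winv w ++ [:: inv_letter a].
Proof. by rewrite -cat1s winv_cat. Qed.

Lemma winv_nseq k a : winv (nseq k a) = nseq k (inv_letter a).
Proof. by rewrite /winv map_nseq rev_nseq. Qed.

Lemma winvK : involutive winv.
Proof.
by move=> w; rewrite /winv map_rev revK -map_comp (eq_map inv_letterK) map_id.
Qed.

Lemma mulwV r w : w ++ winv w = [::] %[rel r].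
Proof.
elim: w => // a w IH; rewrite winv_cons /= catA IH.
exact: (eq_mod_cancel _ [::] [::]).
Qed.

Lemma mulVw r w : winv w ++ w = [::] %[rel r].
Proof. by rewrite -{2}(winvK w) mulwV. Qed.

Lemma mulwVK r w t : w ++ winv w ++ t = t %[rel r].
Proof. by rewrite catA mulwV. Qed.

Lemma mulVwK r w t : winv w ++ w ++ t = t %[rel r].
Proof. by rewrite catA mulVw. Qed.

Lemma mulcVK r c t : c :: inv_letter c :: t = t %[rel r].
Proof. exact: (eq_mod_cancel r [::]). Qed.

Lemma cons_nseq_cat (c : letter) k t : c :: nseq k c ++ t = nseq k c ++ c :: t.
Proof. by elim: k => //= k ->. Qed.

Lemma cons_nseq (c : letter) k : c :: nseq k c = nseq k c ++ [:: c].
Proof. by rewrite -cons_nseq_cat cats0. Qed.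

Lemma nseqVK r c k t : nseq k c ++ nseq k (inv_letter c) ++ t = t %[rel r].
Proof. by rewrite -winv_nseq mulwVK. Qed.

#[export] Instance winv_eq_mod r : Proper (eq_mod r ==> eq_mod r) winv.
Proof.
move=> u v; elim=> {u v} [u | u v _ IH | u v w _ IH1 _ IH2 | u v c | u v] //.
- by symmetry.
- by transitivity (winv v).
- rewrite !winv_cat !winv_cons -!catA /= inv_letterK; exact: eq_mod_cancel.
- have Vr : winv r = [::] %[rel r].
    by rewrite -[winv r]cats0 -(eq_mod_rel r (winv r) [::]) cats0 mulVw.
  by rewrite !winv_cat Vr cats0.
Qed.

Lemma eq_mod_of_relator r p q t : r = p ++ winv q -> p ++ t = q ++ t %[rel r].
Proof.
move=> def_r; transitivity (p ++ winv q ++ q ++ t); first by rewrite mulVwK.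
by rewrite catA -def_r; apply: (eq_mod_rel r [::]).
Qed.

Definition phiw (w : word) : word := flatten (map phi_letter w).

Lemma phiw_cat u v : phiw (u ++ v) = phiw u ++ phiw v.
Proof. by rewrite /phiw map_cat flatten_cat. Qed.

Lemma phiw_cons a w : phiw (a :: w) = phi_letter a ++ phiw w.
Proof. by []. Qed.

Lemma phi_letterV a : phi_letter (inv_letter a) = winv (phi_letter a).
Proof. by case: a => [[] []]. Qed.

Lemma phiw_nseq a k : phi_letter a = [:: a] -> phiw (nseq k a) = nseq k a.
Proof. by move=> phi_a; elim: k => //= k; rewrite phiw_cons phi_a => ->. Qed.

Lemma phiw_winv w : phiw (winv w) = winv (phiw w).
Proof.
elim: w => // a w IH.
by rewrite winv_cons phiw_cat IH !phiw_cons winv_cat [phiw [::]]/= cats0 phi_letterV.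
Qed.

Lemma eq_mod_phiw r u v : u = v %[rel r] -> phiw u = phiw v %[rel phiw r].
Proof.
elim=> {u v} [u | u v _ IH | u v w _ IH1 _ IH2 | u v c | u v] //.
- by symmetry.
- by transitivity (phiw v).
- by rewrite !phiw_cat !phiw_cons phi_letterV [phi_letter c ++ _]catA mulwV.
- by rewrite !phiw_cat; apply: eq_mod_rel.
Qed.

Lemma ac_equiv_step p q : ac_move p q -> ac_equiv p q.
Proof. exact: rt_step. Qed.

(* AC-moves freely reduce the words they produce, so [ac_equiv] is symmetric only
   on pairs of reduced words; we carry both directions explicitly. *)
Definition ac_sim (p q : word * word) : Prop := ac_equiv p q /\ ac_equiv q p.

#[export] Instance ac_sim_equiv : Equivalence ac_sim.
Proof.
split=> [p | p q [] | p q r [pq qp] [qr rq]] //.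
- by split; apply: rt_refl.
- by split; [apply: rt_trans pq qr | apply: rt_trans rq qp].
Qed.

Lemma ac_sim_swap a b a' b' :
  ac_sim (a, b) (a', b') -> ac_sim (b, a) (b', a').
Proof.
have swap p q : ac_equiv p q -> ac_equiv (p.2, p.1) (q.2, q.1).
  elim=> {p q} [p q [] * | p | p q r _ pq _ qr] /=.
  1-6: by apply: ac_equiv_step; constructor.
  - exact: rt_refl.
  - exact: rt_trans pq qr.
by case=> /swap ? /swap.
Qed.

Lemma ac_sim_free a u v : u = v %[rel [::]] -> ac_sim (a, reduce u) (a, reduce v).
Proof. by move/eq_mod0_reduce->; reflexivity. Qed.

Section RelatorReduced.

Variable a : word.
Hypothesis a_reduced : reduced a.

Lemma ac_equiv_conj1K w b : ac_equiv (wconj a w, b) (a, b).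
Proof.
apply: rt_trans (ac_equiv_step (ac_conj1 _ _ (winv w))) _.
suff -> : wconj (wconj a w) (winv w) = a by apply: rt_refl.
rewrite -[RHS](eqP a_reduced) /wconj /wmul; apply: eq_mod0_reduce.
by rewrite !reduce_eq_mod winvK -!catA mulwVK mulwV cats0.
Qed.

Lemma ac_equiv_mul_conj u w : ac_equiv (a, reduce u) (a, reduce (u ++ winv w ++ a ++ w)).
Proof.
apply: rt_trans (ac_equiv_step (ac_conj1 _ _ w)) _.
apply: rt_trans (ac_equiv_step (ac_mul21 _ _)) _.
apply: rt_trans (ac_equiv_conj1K _ _) _.
suff -> : wmul (reduce u) (wconj a w) = reduce (u ++ winv w ++ a ++ w) by apply: rt_refl.
by apply: eq_mod0_reduce; rewrite /wconj /wmul !reduce_eq_mod.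
Qed.

Lemma ac_equiv_mul_conjV u w :
  ac_equiv (a, reduce u) (a, reduce (u ++ winv w ++ winv a ++ w)).
Proof.
apply: rt_trans (ac_equiv_step (ac_conj1 _ _ w)) _.
apply: rt_trans (ac_equiv_step (ac_inv1 _ _)) _.
apply: rt_trans (ac_equiv_step (ac_mul21 _ _)) _.
apply: rt_trans (ac_equiv_step (ac_inv1 _ _)) _; rewrite winvK.
apply: rt_trans (ac_equiv_conj1K _ _) _.
suff -> : wmul (reduce u) (winv (wconj a w)) = reduce (u ++ winv w ++ winv a ++ w).
  exact: rt_refl.
apply: eq_mod0_reduce; rewrite /wconj /wmul !reduce_eq_mod.
by rewrite !winv_cat winvK -!catA.
Qed.

Lemma ac_sim_mul_conj u w : ac_sim (a, reduce u) (a, reduce (u ++ winv w ++ a ++ w)).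
Proof.
split; first exact: ac_equiv_mul_conj.
apply: rt_trans (ac_equiv_mul_conjV _ w) _.
suff -> : reduce ((u ++ winv w ++ a ++ w) ++ winv w ++ winv a ++ w) = reduce u.
  exact: rt_refl.
apply: eq_mod0_reduce.
by rewrite -!catA mulwVK mulwVK mulVw cats0.
Qed.

Lemma ac_sim_eq_mod u v : u = v %[rel a] -> ac_sim (a, reduce u) (a, reduce v).
Proof.
elim=> {u v} [u | u v _ IH | u v w _ IH1 _ IH2 | u v c | u v].
- reflexivity.
- by symmetry.
- by transitivity (a, reduce v).
- exact/ac_sim_free/eq_mod_cancel.
- rewrite (ac_sim_mul_conj (u ++ v) v); apply: ac_sim_free.
  by rewrite -!catA mulwVK.
Qed.

End RelatorReduced.

Lemma ac_sim_conj a u w : ac_sim (a, reduce u) (a, reduce (w ++ u ++ winv w)).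
Proof.
split.
- apply: rt_trans (ac_equiv_step (ac_conj2 _ _ (winv w))) _.
  suff -> : wconj (reduce u) (winv w) = reduce (w ++ u ++ winv w) by apply: rt_refl.
  by apply: eq_mod0_reduce; rewrite /wconj /wmul !reduce_eq_mod winvK.
- apply: rt_trans (ac_equiv_step (ac_conj2 _ _ w)) _.
  suff -> : wconj (reduce (w ++ u ++ winv w)) w = reduce u by apply: rt_refl.
  by apply: eq_mod0_reduce; rewrite /wconj /wmul !reduce_eq_mod -!catA mulVwK mulVw cats0.
Qed.

Lemma ac_sim_eq_mod_conj a u v w :
  v = w ++ u ++ winv w %[rel a] -> ac_sim (reduce a, reduce u) (reduce a, reduce v).
Proof.
move=> /eq_mod_reduce_rel v_conj_u.
have reduced_a : reduced (reduce a) by rewrite /reduced reduce_idem.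
by rewrite (ac_sim_eq_mod reduced_a v_conj_u) -ac_sim_conj; reflexivity.
Qed.

Lemma braid t : [:: lx, ly, lx & t] = [:: ly, lx, ly & t] %[rel AK1].
Proof. by apply: (@eq_mod_of_relator _ [:: lx; ly; lx] [:: ly; lx; ly]). Qed.

Lemma braid_xn k t :
  [:: lx, ly, lx & nseq k lx ++ t] = nseq k ly ++ [:: lx, ly, lx & t] %[rel AK1].
Proof. by elim: k => //= k IH; rewrite braid IH. Qed.

Lemma braid_yn k t :
  [:: lx, ly, lx & nseq k ly ++ t] = nseq k lx ++ [:: lx, ly, lx & t] %[rel AK1].
Proof. by elim: k => //= k IH; rewrite -braid IH. Qed.

Lemma braidV_Yn k t :
  nseq k lY ++ [:: lX, lY, lX & t] = [:: lX, lY, lX & nseq k lX ++ t] %[rel AK1].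
Proof.
have := eq_mod_ctx [::] t (winv_eq_mod (braid_yn k [::])).
by rewrite !cats0 !winv_cons !winv_cat !winv_nseq -!catA.
Qed.

Lemma braid_conj_Yn k t :
  [:: lx, ly, lx & nseq k lY ++ [:: lX, lY, lX & t]] = nseq k lX ++ t %[rel AK1].
Proof. by rewrite braidV_Yn !mulcVK. Qed.

Lemma braid_conj_y t : [:: ly, lx, lY & t] = [:: lX, ly, lx & t] %[rel AK1].
Proof.
transitivity [:: lX, lx, ly, lx, lY & t]; first by rewrite mulcVK.
by rewrite braid mulcVK.
Qed.

Lemma braid_conj_yxn k t :
  ly :: nseq k lx ++ lY :: t = lX :: nseq k ly ++ lx :: t %[rel AK1].
Proof.
elim: k t => [|k IH] t /=; first by rewrite !mulcVK.
transitivity (ly :: nseq k lx ++ [:: lY, ly, lx, lY & t]).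
  by rewrite mulcVK cons_nseq_cat.
by rewrite IH braid_conj_y mulcVK cons_nseq_cat.
Qed.

Definition ak_r2 n : word := nseq n lx ++ nseq n.+1 lY.
Definition ak_s n : word := nseq n.+1 lX ++ ly :: nseq n lx ++ [:: lY].
Definition ak_g n : word := nseq n.+2 lX ++ [:: lx; ly; lx].

Lemma ak_s_conj_r2 n : ak_s n = ak_g n ++ ak_r2 n ++ winv (ak_g n) %[rel AK1].
Proof.
(* Both sides equal x^-(n+2) y^n x. *)
rewrite /ak_s /ak_g /ak_r2 winv_cat winv_nseq -!catA /=.
rewrite braid_xn (braid_conj_Yn n.+1) cons_nseq (nseqVK _ lX n.+1).
by rewrite braid_conj_yxn -cons_nseq_cat.
Qed.

Lemma ak_s_rel n t : nseq n.+1 lX ++ ly :: nseq n lx ++ t = ly :: t %[rel ak_s n].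
Proof.
have def_s : ak_s n = (nseq n.+1 lX ++ ly :: nseq n lx) ++ winv [:: ly].
  by rewrite /ak_s -!catA.
by have := eq_mod_of_relator t def_s; rewrite -!catA.
Qed.

Lemma ak_s_yxn n t : ly :: nseq n lx ++ t = nseq n lx ++ lx :: ly :: t %[rel ak_s n].
Proof. by symmetry; rewrite -ak_s_rel mulcVK nseqVK. Qed.

Lemma ak_s_Yxn n t : lY :: nseq n lx ++ lx :: t = nseq n lx ++ lY :: t %[rel ak_s n].
Proof.
transitivity (lY :: ly :: nseq n lx ++ lY :: t); last by rewrite mulcVK.
by rewrite ak_s_yxn mulcVK.
Qed.

Lemma phi_AK1_conj n :
  phi AK1 = nseq n.+1 lX ++ AK1 ++ winv (nseq n.+1 lX) %[rel ak_s n].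
Proof.
rewrite winv_nseq.
have -> : phi AK1 = [:: lx; ly; lx; lY; lX; lX; lY] by [].
have -> : AK1 = [:: lx; ly; lx; lY; lX; lY] by [].
(* x^-(n+1) r1 x^(n+1) = x^-n y x y^-1 x^-1 x^n y^-1 = x^-n y x y^-1 x^n x^-1 y^-1
     = x^-n y x x^n y^-1 x^-1 x^-1 y^-1 = phi(r1),
   using y^-1 x^(n+1) = x^n y^-1 twice and then y x^n = x^(n+1) y. *)
symmetry; rewrite /= cons_nseq_cat mulcVK cons_nseq ak_s_Yxn.
rewrite -{1}(mulcVK _ lx [:: lY]) -cons_nseq_cat mulcVK.
rewrite -{1}(mulcVK _ lx [:: lX; lY]) ak_s_Yxn.
by rewrite cons_nseq_cat ak_s_yxn nseqVK.
Qed.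

Lemma phiw_ak_s r n : phiw (ak_s n) = ak_s n %[rel r].
Proof.
rewrite /ak_s !phiw_cat phiw_cons !phiw_cat !phiw_nseq // /phiw /=.
by rewrite (cons_nseq_cat lx) mulcVK.
Qed.

Lemma ak_s_conj_phi_r2 n :
  ak_s n = phiw (ak_g n) ++ phiw (ak_r2 n) ++ winv (phiw (ak_g n)) %[rel phi AK1].
Proof.
rewrite -phiw_ak_s -phiw_winv -!phiw_cat.
apply: (@eq_mod_reduce_rel (phiw AK1)); exact: eq_mod_phiw (ak_s_conj_r2 n).
Qed.

Lemma ac_sim_phi_AK n : ac_sim (phi AK1, phi (AK2 n)) (AK1, AK2 n).
Proof.
have phi_AK2 : phi (AK2 n) = reduce (phiw (ak_r2 n)).
  exact/eq_mod0_reduce/(eq_mod_phiw (reduce_eq_mod [::] _)).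
have reduce_AK1 : reduce AK1 = AK1 := reduce_idem _.
have reduce_phi_AK1 : reduce (phi AK1) = phi AK1 := reduce_idem _.
have := ac_sim_eq_mod_conj (ak_s_conj_phi_r2 n).
rewrite reduce_phi_AK1 -phi_AK2 => ->.
have := ac_sim_eq_mod_conj (phi_AK1_conj n).
rewrite reduce_phi_AK1 reduce_AK1 => /ac_sim_swap <-.
have := ac_sim_eq_mod_conj (ak_s_conj_r2 n).
by rewrite reduce_AK1 => ->; reflexivity.
Qed.

Theorem lemma6 (n : nat) (hn : 3 <= n) :
  ac_equiv (phi AK1, phi (AK2 n)) (AK1, AK2 n).
Proof. exact: (ac_sim_phi_AK n).1. Qed.
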